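(* Let $X$ be a set and $B=(B,+,0)$ a unitary magma. For every retraction point $\mathcal A=(A,k,q,s,p)$ from $X$ to $B$, define $\Phi(\mathcal A)\colon X\times B\times X\times B\to X$ by $$\Phi(\mathcal A)(x,b,x',b')=q\big((k(x)+s(b))+(k(x')+s(b'))\big).$$ Then $\Phi(\mathcal A)\in\mathbf{Act}(X,B)$, and for any two retraction points $\mathcal A,\mathcal A'$ from $X$ to $B$ one has $\mathcal A\sim\mathcal A'$ if and only if $\Phi(\mathcal A)=\Phi(\mathcal A')$. Consequently $\Phi$ induces a bijection $$\mathbf{Ptr}(X,B)/\!\sim\;\cong\;\mathbf{Act}(X,B).$$
   Context: A unitary magma is a set with a binary operation $+$ and an element $0$ with $b+0=b=0+b$ for all $b$; morphisms preserve $+$ and $0$. Given a set $X$ and a unitary magma $B=(B,+,0)$, a retraction point from $X$ to $B$ is a tuple $(A,k,q,s,p)$ where $A=(A,+,0)$ is a unitary magma, $k\colon X\to A$ and $q\colon A\to X$ are maps, $s\colon B\to A$ and $p\colon A\to B$ are morphisms of unitary magmas, and $p(s(b))=b$, $q(k(x))=x$, $p(k(x))=0$, $q(s(b))=q(0)$, and $k(q(a))+s(p(a))=a$ for all $x\in X$, $b\in B$, $a\in A$. $\mathbf{Ptr}(X,B)$ denotes the collection of all retraction points from $X$ to $B$. Two retraction points $(A,k,q,s,p)$ and $(A',k',q',s',p')$ from $X$ to $B$ are equivalent, written $\sim$, if there is a morphism of unitary magmas $\alpha\colon A\to A'$ with $\alpha k=k'$, $\alpha s=s'$ and $q'\alpha=q$.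 A $B$-action is a pair $(X,\varphi)$ with $X$ a set and $\varphi\colon X\times B\times X\times B\to X$ a map such that: (1) there is an element $0\in X$ with $\varphi(x,0,0,0)=x=\varphi(0,0,x,0)$ for all $x\in X$; (2) $\varphi(x,b,0,0)=\varphi(x,0,0,b)=\varphi(0,0,x,b)$ for all $x\in X,b\in B$; (3) $\varphi(0,b,0,b')=0$ for all $b,b'\in B$; (4) writing $\varphi_{00}(x,b)=\varphi(x,0,0,b)$, for all $x,x'\in X$, $b,b'\in B$: $\varphi(x,b,x',b')=\varphi_{00}\big(\varphi(\varphi_{00}(x,b),b,\varphi_{00}(x',b'),b'),\,b+b'\big)$. $\mathbf{Act}(X,B)$ denotes the set of all maps $\varphi$ such that $(X,\varphi)$ is a $B$-action. *)

Set Implicit Arguments.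

Record UMagma := {
  um_car :> Type;
  um_add : um_car -> um_car -> um_car;
  um_zero : um_car;
  um_add0r : forall b, um_add b um_zero = b;
  um_add0l : forall b, um_add um_zero b = b
}.
Arguments um_add {_} _ _.
Arguments um_zero {_}.

Definition um_morph (M N : UMagma) (f : M -> N) : Prop :=
  (forall a b, f (um_add a b) = um_add (f a) (f b)) /\ f um_zero = um_zero.

Record RetrPoint (X : Type) (B : UMagma) := {
  rp_A : UMagma;
  rp_k : X -> rp_A;
  rp_q : rp_A -> X;
  rp_s : B -> rp_A;
  rp_p : rp_A -> B;
  rp_s_morph : um_morph B rp_A rp_s;
  rp_p_morph : um_morph rp_A B rp_p;
  rp_ps : forall b, rp_p (rp_s b) = b;
  rp_qk : forall x, rp_q (rp_k x) = x;
  rp_pk : forall x, rp_p (rp_k x) = um_zero;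
  rp_qs : forall b, rp_q (rp_s b) = rp_q um_zero;
  rp_split : forall a, um_add (rp_k (rp_q a)) (rp_s (rp_p a)) = a
}.

Definition rp_equiv (X : Type) (B : UMagma) (R R' : RetrPoint X B) : Prop :=
  exists alpha : rp_A R -> rp_A R',
    um_morph (rp_A R) (rp_A R') alpha /\
    (forall x, alpha (rp_k R x) = rp_k R' x) /\
    (forall b, alpha (rp_s R b) = rp_s R' b) /\
    (forall a, rp_q R' (alpha a) = rp_q R a).

(** B-actions; phi : X x B x X x B -> X is written curried.
    The element 0 of X from axiom (1) is the one referred to in (2)-(4). *)
Definition is_action (X : Type) (B : UMagma) (phi : X -> B -> X -> B -> X) : Prop :=
  exists z : X,
    (forall x, phi x um_zero z um_zero = x /\ phi z um_zero x um_zero = x) /\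
    (forall x b, phi x b z um_zero = phi x um_zero z b /\
                 phi x um_zero z b = phi z um_zero x b) /\
    (forall b b', phi z b z b' = z) /\
    (forall x x' b b',
       phi x b x' b' =
       phi (phi (phi x um_zero z b) b (phi x' um_zero z b') b') um_zero z (um_add b b')).

Definition Act (X : Type) (B : UMagma) : (X -> B -> X -> B -> X) -> Prop :=
  is_action B.

Definition Phi (X : Type) (B : UMagma) (R : RetrPoint X B) : X -> B -> X -> B -> X :=
  fun x b x' b' =>
    rp_q R (um_add (um_add (rp_k R x) (rp_s R b)) (um_add (rp_k R x') (rp_s R b'))).

(** Every element of a retraction point splits as [a = k (q a) + s (p a)], so
    [A] is coordinatised by pairs [(x, b)] and its addition is recorded by
    [Phi]: an equivalence is forced to be [a |-> k' (q a) + s' (p a)], which is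
    additive exactly when [Phi] agrees.  Conversely, for an action [phi] the
    pairs [(x, b)] with [phi x 0 0 b = x] form a unitary magma under
    [(x, b) + (x', b') = (phi x b x' b', b + b')]: axiom (4) says precisely
    that such pairs are closed under this operation.  With [k x = (x, 0)],
    [s b = (0, b)] and the two projections this is a retraction point whose
    [Phi] is [phi]. *)
From Stdlib Require Import ProofIrrelevance FunctionalExtensionality.
Set Implicit Arguments.

Section RetractionPoint.
Variables (X : Type) (B : UMagma) (R : RetrPoint X B).

Local Notation k := (rp_k R).
Local Notation q := (rp_q R).
Local Notation s := (rp_s R).
Local Notation p := (rp_p R).

Definition rp_pair (x : X) (b : B) : rp_A R := um_add (k x) (s b).

Lemma PhiE x b x' b' : Phi R x b x' b' = q (um_add (rp_pair x b) (rp_pair x' b')).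
Proof. reflexivity. Qed.

Lemma rp_sD b b' : s (um_add b b') = um_add (s b) (s b').
Proof. exact (proj1 (rp_s_morph R) b b'). Qed.

Lemma rp_s0 : s um_zero = um_zero.
Proof. exact (proj2 (rp_s_morph R)). Qed.

Lemma rp_pD a a' : p (um_add a a') = um_add (p a) (p a').
Proof. exact (proj1 (rp_p_morph R) a a'). Qed.

Lemma rp_p0 : p um_zero = um_zero.
Proof. exact (proj2 (rp_p_morph R)). Qed.

Lemma rp_kq0 : k (q um_zero) = um_zero.
Proof.
  pose proof (rp_split R um_zero) as split0.
  now rewrite rp_p0, rp_s0, um_add0r in split0.
Qed.

Lemma rp_pair_qp a : rp_pair (q a) (p a) = a.
Proof. exact (rp_split R a). Qed.

Lemma rp_pair_x0 x : rp_pair x um_zero = k x.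
Proof. unfold rp_pair. now rewrite rp_s0, um_add0r. Qed.

Lemma rp_pair_q0 b : rp_pair (q um_zero) b = s b.
Proof. unfold rp_pair. now rewrite rp_kq0, um_add0l. Qed.

Lemma rp_p_pair x b : p (rp_pair x b) = b.
Proof. unfold rp_pair. now rewrite rp_pD, rp_pk, rp_ps, um_add0l. Qed.

Lemma rp_pair_q_pair x b : rp_pair (q (rp_pair x b)) b = rp_pair x b.
Proof.
  pose proof (rp_pair_qp (rp_pair x b)) as split_pair.
  now rewrite rp_p_pair in split_pair.
Qed.

Lemma Phi_q0_r x b b' : Phi R x b (q um_zero) b' = q (um_add (rp_pair x b) (s b')).
Proof. now rewrite PhiE, rp_pair_q0. Qed.

Lemma Phi_q0_l x b b' : Phi R (q um_zero) b x b' = q (um_add (s b) (rp_pair x b')).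
Proof. now rewrite PhiE, rp_pair_q0. Qed.

Lemma Phi_x0q0 x b : Phi R x um_zero (q um_zero) b = q (rp_pair x b).
Proof. now rewrite PhiE, rp_pair_x0, rp_pair_q0. Qed.

Lemma Phi_unit_r x : Phi R x um_zero (q um_zero) um_zero = x.
Proof. now rewrite Phi_x0q0, rp_pair_x0, rp_qk. Qed.

Lemma Phi_unit_l x : Phi R (q um_zero) um_zero x um_zero = x.
Proof. now rewrite Phi_q0_l, rp_s0, um_add0l, rp_pair_x0, rp_qk. Qed.

Lemma Phi_is_action : Act B (Phi R).
Proof.
  exists (q um_zero). split; [|split; [|split]].
  - intro x. split; [apply Phi_unit_r | apply Phi_unit_l].
  - intros x b. rewrite Phi_x0q0, Phi_q0_r, Phi_q0_l, rp_s0, um_add0r, um_add0l.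
    split; reflexivity.
  - intros b b'. now rewrite Phi_q0_r, rp_pair_q0, <- rp_sD, rp_qs.
  - intros x x' b b'.
    rewrite !Phi_x0q0, !PhiE, !rp_pair_q_pair.
    set (a := um_add (rp_pair x b) (rp_pair x' b')).
    assert (p_a : p a = um_add b b') by (unfold a; now rewrite rp_pD, !rp_p_pair).
    now rewrite <- p_a, rp_pair_qp.
Qed.

End RetractionPoint.

Lemma Phi_eq_of_rp_equiv X B (R R' : RetrPoint X B) : rp_equiv R R' -> Phi R = Phi R'.
Proof.
  intros (alpha & [alphaD _] & alpha_k & alpha_s & q_alpha).
  do 4 (apply functional_extensionality; intro).
  unfold Phi. now rewrite <- q_alpha, !alphaD, !alpha_k, !alpha_s.
Qed.

Section EquivalenceOfPhiEq.
Variables (X : Type) (B : UMagma) (R R' : RetrPoint X B).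
Hypothesis Phi_eq : Phi R = Phi R'.

Lemma rp_q0_eq : rp_q R' um_zero = rp_q R um_zero.
Proof.
  rewrite <- (Phi_unit_r R (rp_q R' um_zero)), Phi_eq.
  apply Phi_unit_l.
Qed.

Lemma rp_q_pair_eq x b : rp_q R' (rp_pair R' x b) = rp_q R (rp_pair R x b).
Proof. now rewrite <- !Phi_x0q0, rp_q0_eq, Phi_eq. Qed.

Definition rp_transfer (a : rp_A R) : rp_A R' := rp_pair R' (rp_q R a) (rp_p R a).

Lemma rp_transferD a a' :
  rp_transfer (um_add a a') = um_add (rp_transfer a) (rp_transfer a').
Proof.
  set (c := um_add (rp_transfer a) (rp_transfer a')).
  assert (q_c : rp_q R' c = rp_q R (um_add a a')).
  { unfold c, rp_transfer. rewrite <- PhiE, <- Phi_eq, PhiE, !rp_pair_qp.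
    reflexivity. }
  assert (p_c : rp_p R' c = rp_p R (um_add a a')).
  { unfold c, rp_transfer. now rewrite rp_pD, !rp_p_pair, rp_pD. }
  unfold rp_transfer at 1. rewrite <- q_c, <- p_c. apply rp_pair_qp.
Qed.

Lemma rp_transfer0 : rp_transfer um_zero = um_zero.
Proof. unfold rp_transfer. now rewrite rp_p0, <- rp_q0_eq, rp_pair_q0, rp_s0. Qed.

Lemma rp_equiv_of_Phi_eq : rp_equiv R R'.
Proof.
  exists rp_transfer. unfold rp_transfer.
  split; [split; [exact rp_transferD | exact rp_transfer0]|split; [|split]].
  - intro x. now rewrite rp_qk, rp_pk, rp_pair_x0.
  - intro b. now rewrite rp_qs, rp_ps, <- rp_q0_eq, rp_pair_q0.
  - intro a. now rewrite rp_q_pair_eq, rp_pair_qp.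
Qed.

End EquivalenceOfPhiEq.

Section RetractionPointOfAction.
Variables (X : Type) (B : UMagma) (phi : X -> B -> X -> B -> X) (z : X).
Hypothesis act_unit : forall x, phi x um_zero z um_zero = x.
Hypothesis act_shift : forall x b, phi x b z um_zero = phi x um_zero z b.
Hypothesis act_swap : forall x b, phi x um_zero z b = phi z um_zero x b.
Hypothesis act_zero : forall b b', phi z b z b' = z.
Hypothesis act_assoc : forall x x' b b',
  phi x b x' b' =
  phi (phi (phi x um_zero z b) b (phi x' um_zero z b') b') um_zero z (um_add b b').

Record fixed_pair := FixedPair {
  fp_x : X;
  fp_b : B;
  fp_fixed : phi fp_x um_zero z fp_b = fp_x
}.

Lemma fixed_pair_eq u v : fp_x u = fp_x v -> fp_b u = fp_b v -> u = v.
Proof.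
  destruct u as [x b H], v as [x' b' H']; simpl. intros <- <-.
  now rewrite (proof_irrelevance _ H H').
Qed.

Lemma fp_add_fixed u v :
  phi (phi (fp_x u) (fp_b u) (fp_x v) (fp_b v)) um_zero z (um_add (fp_b u) (fp_b v))
  = phi (fp_x u) (fp_b u) (fp_x v) (fp_b v).
Proof.
  pose proof (act_assoc (fp_x u) (fp_x v) (fp_b u) (fp_b v)) as assoc_uv.
  rewrite !fp_fixed in assoc_uv. now symmetry.
Qed.

Definition fp_add (u v : fixed_pair) : fixed_pair :=
  FixedPair (fp_add_fixed u v).

Definition fp_zero : fixed_pair := FixedPair (act_unit z).

Lemma fp_add0r u : fp_add u fp_zero = u.
Proof.
  apply fixed_pair_eq; simpl; [now rewrite act_shift, fp_fixed | apply um_add0r].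
Qed.

Lemma fp_add0l u : fp_add fp_zero u = u.
Proof.
  apply fixed_pair_eq; simpl; [now rewrite <- act_swap, fp_fixed | apply um_add0l].
Qed.

Definition fixed_pair_magma : UMagma :=
  {| um_car := fixed_pair; um_add := fp_add; um_zero := fp_zero;
     um_add0r := fp_add0r; um_add0l := fp_add0l |}.

Definition fp_k (x : X) : fixed_pair_magma := FixedPair (act_unit x).

Definition fp_s (b : B) : fixed_pair_magma := FixedPair (act_zero um_zero b).

Lemma fp_s_morph : um_morph B fixed_pair_magma fp_s.
Proof.
  split.
  - intros b b'. apply fixed_pair_eq; simpl; [now rewrite act_zero | reflexivity].
  - now apply fixed_pair_eq.
Qed.

Lemma fp_b_morph : um_morph fixed_pair_magma B fp_b.
Proof. now split. Qed.

Lemma fp_split (u : fixed_pair_magma) : um_add (fp_k (fp_x u)) (fp_s (fp_b u)) = u.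
Proof.
  apply fixed_pair_eq; simpl; [apply fp_fixed | apply um_add0l].
Qed.

Definition action_retraction : RetrPoint X B :=
  {| rp_A := fixed_pair_magma; rp_k := fp_k; rp_q := fp_x; rp_s := fp_s; rp_p := fp_b;
     rp_s_morph := fp_s_morph; rp_p_morph := fp_b_morph;
     rp_ps := fun _ => eq_refl; rp_qk := fun _ => eq_refl; rp_pk := fun _ => eq_refl;
     rp_qs := fun _ => eq_refl; rp_split := fp_split |}.

Lemma Phi_action_retraction : Phi action_retraction = phi.
Proof.
  apply functional_extensionality; intro x; apply functional_extensionality; intro b.
  apply functional_extensionality; intro x'; apply functional_extensionality; intro b'.
  pose proof (fp_add_fixed (fp_add (fp_k x) (fp_s b)) (fp_add (fp_k x') (fp_s b')))
    as sum_fixed.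
  simpl in sum_fixed |- *. rewrite !um_add0l in sum_fixed |- *.
  now rewrite (act_assoc x x' b b').
Qed.

End RetractionPointOfAction.

Theorem proposition5p3 (X : Type) (B : UMagma) :
  (forall R : RetrPoint X B, Act B (Phi R)) /\
  (forall R R' : RetrPoint X B, rp_equiv R R' <-> Phi R = Phi R') /\
  (forall phi, Act B phi -> exists R : RetrPoint X B, Phi R = phi).
Proof.
  split; [|split].
  - exact (@Phi_is_action X B).
  - intros R R'. split; [apply Phi_eq_of_rp_equiv | apply rp_equiv_of_Phi_eq].
  - intros phi (z & unit_z & shift_z & zero_z & assoc_z).
    exists (action_retraction B phi (fun x => proj1 (unit_z x))
              (fun x b => proj1 (shift_z x b)) (fun x b => proj2 (shift_z x b))
              zero_z assoc_z).
    apply Phi_action_retraction.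
Qed.
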